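(* Let $n\ge 0$ and $i,j,a,b\in D$ with $a\neq b$, $a\Rightarrow_n b$, $A_i(a)=1$ and $A_j(a)=0$. Define the vector $A_i^*=s_{ab}A_i\in\{0,1\}^D$ by $A_i^*(m)=A_i(m)$ for $m\notin\{a,b\}$, $A_i^*(a)=0$, $A_i^*(b)=1$. If $A_i^*\le A_j$ entrywise, then $i\Rightarrow_{n+1} j$.
   Context: Fix integers $k\ge1$, $d\ge1$, $K=\{1,\dots,k\}$, $D=\{1,\dots,d\}$. The $k$-tree is the set $K^*$ of finite words over $K$ with root the empty word $\epsilon$; $xg$ ($g\in K$) are the children of $x$. $L_n$ is the set of words of length exactly $n$ and $\Delta_n$ the set of words of length at most $n$. $A$ is a $d\times d$ matrix with entries in $\{0,1\}$, and $A_i=(A(i,1),\dots,A(i,d))$ denotes row $i$, with $A_i(m)=A(i,m)$. A (valid) labeling of $\Delta_n$ is a map $\lambda:\Delta_n\to D$ with $A(\lambda(x),\lambda(xg))=1$ for all $x\in\Delta_{n-1}$, $g\in K$. For $p,q\in D$, $p\Rightarrow_n q$ means: for every valid labeling $\lambda$ of $\Delta_n$ with $\lambda(\epsilon)=p$ there is a valid labeling $\lambda'$ of $\Delta_n$ with $\lambda'(\epsilon)=q$ and $\lambda'|_{L_n}=\lambda|_{L_n}$. *)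

From mathcomp Require Import all_boot.
Set Implicit Arguments. Unset Strict Implicit. Unset Printing Implicit Defensive.

(* Words over K = 'I_k are sequences; the child x g of x is rcons x g;
   the root is the empty word [::].  The 0/1 matrix A is
   encoded as a boolean matrix A : 'I_d -> 'I_d -> bool (A i m = true <-> A(i,m)=1). *)

(* lambda : seq 'I_k -> 'I_d is a valid labeling of Delta_n: only its values on
   words of length <= n matter. *)
Definition valid_labeling (k d : nat) (A : 'I_d -> 'I_d -> bool) (n : nat)
  (lam : seq 'I_k -> 'I_d) : Prop :=
  forall (x : seq 'I_k) (g : 'I_k), size x < n -> A (lam x) (lam (rcons x g)).

Definition implies_n (k d : nat) (A : 'I_d -> 'I_d -> bool) (n : nat)
  (p q : 'I_d) : Prop :=
  forall lam : seq 'I_k -> 'I_d,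
    valid_labeling A n lam -> lam [::] = p ->
    exists lam' : seq 'I_k -> 'I_d,
      [/\ valid_labeling A n lam', lam' [::] = q &
          forall x : seq 'I_k, size x = n -> lam' x = lam x].

Definition swap_row (d : nat) (A : 'I_d -> 'I_d -> bool) (i a b : 'I_d) (m : 'I_d) : bool :=
  if m == a then false else if m == b then true else A i m.

From mathcomp Require Import all_boot.
From Stdlib Require Import ClassicalEpsilon.

Set Implicit Arguments.
Unset Strict Implicit.
Unset Printing Implicit Defensive.

(* A labeling of Delta_{n+1} is a root label together with k labelings of
   Delta_n, one per subtree.  Hence p =>_{n+1} q as soon as every admissible
   child label c of p can be traded for an admissible child label c' of q with
   c =>_n c'.  For the proposition, a child labelled a is relabelled b
   (a =>_n b, and A_j(b) = 1 because s_ab A_i has b in its support), while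
   any other child c of i keeps its label: A_i(c) = 1 and c <> a force
   (s_ab A_i)(c) = 1, hence A_j(c) = 1. *)

Section Grafting.

Variables (k d : nat) (A : 'I_d -> 'I_d -> bool).

Definition subtree (lam : seq 'I_k -> 'I_d) (g : 'I_k) (y : seq 'I_k) : 'I_d :=
  lam (g :: y).

Definition graft (r : 'I_d) (lams : 'I_k -> seq 'I_k -> 'I_d)
    (x : seq 'I_k) : 'I_d :=
  if x is g :: y then lams g y else r.

Lemma valid_labeling_subtree n lam g :
  valid_labeling A n.+1 lam -> valid_labeling A n (subtree lam g).
Proof. by move=> Vlam y h sy; rewrite /subtree -rcons_cons; apply: Vlam. Qed.

Lemma valid_labeling_graft n r lams :
  (forall g, A r (lams g [::])) -> (forall g, valid_labeling A n (lams g)) ->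
  valid_labeling A n.+1 (graft r lams).
Proof. by move=> Aroot Vlams [|g y] h //= sy; apply: Vlams. Qed.

Lemma implies_n_refl n p : implies_n k A n p p.
Proof. by move=> lam Vlam lam0; exists lam. Qed.

Lemma implies_nS n p q :
  (forall c, A p c -> exists2 c', A q c' & implies_n k A n c c') ->
  implies_n k A n.+1 p q.
Proof.
move=> trade lam Vlam lam0.
have sub_trade g : exists lg : seq 'I_k -> 'I_d,
    [/\ valid_labeling A n lg, A q (lg [::]) &
        forall y, size y = n -> lg y = subtree lam g y].
  have Ap : A p (lam [:: g]) by rewrite -lam0; apply: (Vlam [::]).
  have [c' Aqc' /(_ _ (valid_labeling_subtree g Vlam) erefl)] := trade _ Ap.
  by case=> lg [Vlg lg0 leaves]; exists lg; rewrite lg0.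
have [lams Hlams] := choice _ sub_trade.
exists (graft q lams); split => //.
- by apply: valid_labeling_graft => g; have [] := Hlams g.
- by case=> [|g y] //= [sy]; have [_ _ ->] := Hlams g.
Qed.

End Grafting.

Theorem proposition3p4 (k d : nat) (hk : 1 <= k) (hd : 1 <= d)
  (A : 'I_d -> 'I_d -> bool) (n : nat) (i j a b : 'I_d) :
  a != b ->
  implies_n k A n a b ->
  A i a = true ->
  A j a = false ->
  (forall m : 'I_d, swap_row A i a b m ==> A j m) ->
  implies_n k A n.+1 i j.
Proof.
move=> neq_ab a_to_b _ _ swap_le.
apply: implies_nS => c Aic; case: (eqVneq c a) => [->|neq_ca].
- exists b => //.
  by have := swap_le b; rewrite /swap_row eq_sym (negbTE neq_ab) eqxx.
- exists c; last exact: implies_n_refl.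
  by have := swap_le c; rewrite /swap_row (negbTE neq_ca) Aic if_same.
Qed.
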